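(* Let $n,k$ be integers with $2\le k\le n/2$ and let $P$ be a Gutkin $(n,k)$-gon with vertices $v_0,\dots,v_{n-1}$. Then for every $i$, the interior angles of $P$ at the vertices $v_i$ and $v_{i+k-1}$ are equal (indices modulo $n$).
   Context: Let $P$ be a convex $n$-gon in the Euclidean plane with vertices $v_0,\dots,v_{n-1}$ in their cyclic (counterclockwise) order, indices taken modulo $n$. $P$ is a Gutkin $(n,k)$-gon if there exists an angle $\alpha$ such that for every $i$, $\angle v_{i+1}v_iv_{i+k}=\angle v_{i+k-1}v_{i+k}v_i=\alpha$, where $\angle abc$ denotes the angle at $b$ between the segments $ba$ and $bc$. *)

From Stdlib Require Import Reals Lra Lia Arith.
Open Scope R_scope.

Definition point := (R * R)%type.

Definition dot (a b : point) : R := fst a * fst b + snd a * snd b.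
Definition vsub (a b : point) : point := (fst a - fst b, snd a - snd b).
Definition norm (a : point) : R := sqrt (dot a a).
Definition cross3 (a b c : point) : R :=
  (fst b - fst a) * (snd c - snd a) - (snd b - snd a) * (fst c - fst a).

Definition angle (a b c : point) : R :=
  acos (dot (vsub a b) (vsub c b) / (norm (vsub a b) * norm (vsub c b))).

Definition vert (n : nat) (v : nat -> point) (i : nat) : point := v (i mod n)%nat.

Definition convex_ccw_polygon (n : nat) (v : nat -> point) : Prop :=
  (3 <= n)%nat /\
  forall i j : nat, (i < n)%nat -> (j < n)%nat ->
    j <> i -> j <> ((i + 1) mod n)%nat ->
    0 < cross3 (v i) (v ((i + 1) mod n)%nat) (v j).

Definition gutkin (n k : nat) (v : nat -> point) : Prop :=
  convex_ccw_polygon n v /\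
  exists alpha : R, forall i : nat,
    angle (vert n v (i + 1)) (vert n v i) (vert n v (i + k)) = alpha /\
    angle (vert n v (i + k - 1)) (vert n v (i + k)) (vert n v i) = alpha.

Definition interior_angle (n : nat) (v : nat -> point) (i : nat) : R :=
  angle (vert n v (i + n - 1)) (vert n v i) (vert n v (i + 1)).

From Stdlib Require Import Reals Lra Lia.
Open Scope R_scope.

(* Write A = v_(i-1), B = v_i, B' = v_(i+1), C' = v_(i+k-2), C = v_(i+k-1),
   D = v_(i+k).  The Gutkin condition at i and i-1 gives the angle equalities
   BAC = BDC and B'BD = ACC'.  The first says that A, B, C, D are concyclic, so
   by the inscribed angle theorem DBA = DCA; adding B'BD = ACC' gives
   B'BA = DCC', i.e. equal interior angles at B and C.  The angle sums are
   carried out with complex numbers: an angle at b is the argument of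
   conj(a - b) (c - b), and two such angles in (0, PI) agree iff these complex
   numbers are real multiples of each other. *)

(* conj (a - b) * (c - b), as a complex number (real part, imaginary part). *)
Definition turn (a b c : point) : point := (dot (vsub a b) (vsub c b), cross3 b a c).

Definition cmul (z w : point) : point :=
  (fst z * fst w - snd z * snd w, fst z * snd w + snd z * fst w).

Definition scale (s : R) (z : point) : point := (s * fst z, s * snd z).

Definition det2 (z w : point) : R := fst z * snd w - snd z * fst w.

Lemma cross3_cycle (a b c : point) : cross3 a b c = cross3 b c a.
Proof. unfold cross3. ring. Qed.

Lemma angle_sym (a b c : point) : angle a b c = angle c b a.
Proof.
  unfold angle. f_equal. unfold dot. rewrite (Rmult_comm (norm (vsub a b))).
  f_equal. ring.
Qed.

Lemma cmul_comm (z w : point) : cmul z w = cmul w z.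
Proof. unfold cmul. f_equal; ring. Qed.

Lemma det2_cmul (z w z' w' : point) :
  det2 (cmul z w) (cmul z' w') = dot z z' * det2 w w' + det2 z z' * dot w w'.
Proof. unfold det2, cmul, dot; simpl. ring. Qed.

Lemma det2_scale (s t : R) (z w : point) :
  det2 (scale s z) (scale t w) = s * t * det2 z w.
Proof. unfold det2, scale; simpl. ring. Qed.

Lemma turn_cmul (a b c d : point) :
  cmul (turn a b c) (turn c b d) = scale (dot (vsub c b) (vsub c b)) (turn a b d).
Proof. unfold cmul, scale, turn, dot, vsub, cross3; simpl. f_equal; ring. Qed.

(* Inscribed angle theorem: both sides vanish iff A, B, C, D are concyclic or collinear. *)
Lemma det2_turn_inscribed (A B C D : point) :
  det2 (turn B A C) (turn B D C) = - det2 (turn D B A) (turn D C A).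
Proof. unfold det2, turn, dot, vsub, cross3; simpl. ring. Qed.

Lemma norm_sqr (z : point) : norm z * norm z = dot z z.
Proof. apply sqrt_sqrt. unfold dot. nra. Qed.

Lemma norm_pos (z : point) : 0 < snd z -> 0 < norm z.
Proof. intro Hy. apply sqrt_lt_R0. unfold dot. nra. Qed.

Lemma lagrange (a b c : point) :
  dot (vsub a b) (vsub a b) * dot (vsub c b) (vsub c b) = dot (turn a b c) (turn a b c).
Proof. unfold turn, dot, vsub, cross3; simpl. ring. Qed.

Lemma norm_turn (a b c : point) :
  norm (vsub a b) * norm (vsub c b) = norm (turn a b c).
Proof.
  unfold norm. rewrite <- sqrt_mult by (unfold dot; nra).
  now rewrite lagrange.
Qed.

Lemma angle_turn (a b c : point) :
  angle a b c = acos (fst (turn a b c) / norm (turn a b c)).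
Proof. unfold angle. rewrite norm_turn. reflexivity. Qed.

Lemma cos_ratio_bound (z : point) : 0 < snd z -> -1 <= fst z / norm z <= 1.
Proof.
  intro Hy. pose proof (norm_pos z Hy) as Hr. pose proof (norm_sqr z) as Hr2.
  unfold dot in Hr2. set (c := fst z / norm z).
  assert (Hx : fst z = c * norm z) by (unfold c; field; lra).
  rewrite Hx in Hr2.
  assert (Hc : (1 - c * c) * (norm z * norm z) = snd z * snd z) by lra.
  assert (c * c <= 1).
  { destruct (Rle_dec (c * c) 1); [assumption|]. nra. }
  nra.
Qed.

Lemma sqr_eq_same_sign (p q : R) : p * p = q * q -> 0 <= p * q -> p = q.
Proof.
  intros Hsq Hpq.
  assert (E : (p - q) * (p + q) = 0) by lra.
  destruct (Rmult_integral _ _ E); nra.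
Qed.

Lemma norm_scale (s : R) (z : point) : 0 <= s -> norm (scale s z) = s * norm z.
Proof.
  intro Hs. unfold norm.
  replace (dot (scale s z) (scale s z)) with (s * s * dot z z)
    by (unfold dot, scale; simpl; ring).
  rewrite sqrt_mult, sqrt_square by (unfold dot; nra). reflexivity.
Qed.

(* In the upper half plane, the cosine of the argument determines the direction. *)
Lemma cos_ratio_eq_det2 (z w : point) : 0 < snd z -> 0 < snd w ->
  fst z / norm z = fst w / norm w -> det2 z w = 0.
Proof.
  destruct z as [x y], w as [x' y']. unfold det2; simpl. intros Hy Hy' H.
  pose proof (norm_pos (x, y) Hy) as Hr. pose proof (norm_pos (x', y') Hy') as Hs.
  pose proof (norm_sqr (x, y)) as Hr2. pose proof (norm_sqr (x', y')) as Hs2.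
  unfold dot in Hr2, Hs2; simpl in Hr2, Hs2.
  set (r := norm (x, y)) in *. set (s := norm (x', y')) in *.
  assert (Hxs : x * s = x' * r).
  { replace (x * s) with (x / r * (r * s)) by (field; lra). rewrite H. field. lra. }
  assert (Hxy : (x * y') * (x * y') = (x' * y) * (x' * y)).
  { assert (E : (x * s) * (x * s) = (x' * r) * (x' * r)) by now rewrite Hxs.
    replace ((x * s) * (x * s)) with (x * x * (s * s)) in E by ring.
    replace ((x' * r) * (x' * r)) with (x' * x' * (r * r)) in E by ring.
    rewrite Hr2, Hs2 in E. nra. }
  assert (Hys2 : (y * s) * (y * s) = (y' * r) * (y' * r)).
  { replace ((y * s) * (y * s)) with (y * y * (s * s)) by ring.
    replace ((y' * r) * (y' * r)) with (y' * y' * (r * r)) by ring.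
    rewrite Hr2, Hs2. nra. }
  assert (Hys : y * s = y' * r).
  { apply sqr_eq_same_sign; [exact Hys2|].
    apply Rlt_le, Rmult_lt_0_compat; apply Rmult_lt_0_compat; assumption. }
  apply (Rmult_eq_reg_r r); [| lra].
  replace ((x * y' - y * x') * r) with (x * (y' * r) - y * (x' * r)) by ring.
  rewrite <- Hys, <- Hxs. ring.
Qed.

Lemma det2_cos_ratio_eq (z w : point) : 0 < snd z -> 0 < snd w ->
  det2 z w = 0 -> fst z / norm z = fst w / norm w.
Proof.
  destruct z as [x y], w as [x' y']. intros Hy Hy' H.
  unfold det2 in H; simpl in Hy, Hy', H.
  assert (Hw : (x', y') = scale (y' / y) (x, y)).
  { unfold scale; simpl. f_equal.
    - apply (Rmult_eq_reg_r y); [| lra]. field_simplify; lra.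
    - field. lra. }
  pose proof (norm_pos (x, y) Hy).
  rewrite Hw, norm_scale by (apply Rlt_le, Rdiv_lt_0_compat; assumption).
  unfold scale; simpl. field. lra.
Qed.

Lemma angle_eq_iff_det2 (a b c a' b' c' : point) :
  0 < cross3 b a c -> 0 < cross3 b' a' c' ->
  angle a b c = angle a' b' c' <-> det2 (turn a b c) (turn a' b' c') = 0.
Proof.
  intros H H'. rewrite !angle_turn.
  pose proof (cos_ratio_bound (turn a b c) H).
  pose proof (cos_ratio_bound (turn a' b' c') H').
  split; intro E.
  - apply cos_ratio_eq_det2; [assumption | assumption |].
    rewrite <- (cos_acos (fst (turn a b c) / _)), <- (cos_acos (fst (turn a' b' c') / _))
      by assumption.
    now rewrite E.
  - now rewrite (det2_cos_ratio_eq (turn a b c) (turn a' b' c') H H' E).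
Qed.

Lemma dot_vsub_pos (a b c : point) : 0 < cross3 a b c -> 0 < dot (vsub c a) (vsub c a).
Proof.
  intro H. pose proof (lagrange b a c) as E.
  change (dot (turn b a c) (turn b a c))
    with (fst (turn b a c) * fst (turn b a c) + cross3 a b c * cross3 a b c) in E.
  assert (Hw : 0 <= dot (vsub c a) (vsub c a)) by (unfold dot; nra).
  destruct (Rle_lt_dec (dot (vsub c a) (vsub c a)) 0); [|assumption].
  assert (Hw0 : dot (vsub c a) (vsub c a) = 0) by lra.
  rewrite Hw0, Rmult_0_r in E. nra.
Qed.

Lemma angle_transfer (A B B' C' C D : point) :
  0 < cross3 A B C -> 0 < cross3 C D B -> 0 < cross3 B B' D -> 0 < cross3 C' C A ->
  0 < cross3 B B' A -> 0 < cross3 C D C' ->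
  angle B A C = angle B D C -> angle B' B D = angle A C C' ->
  angle B' B A = angle D C C'.
Proof.
  intros hABC hCDB hBB'D hC'CA hBB'A hCDC' hcyc hbase.
  rewrite cross3_cycle in hCDB, hC'CA.
  apply (angle_eq_iff_det2 _ _ _ _ _ _ hABC hCDB) in hcyc.
  apply (angle_eq_iff_det2 _ _ _ _ _ _ hBB'D hC'CA) in hbase.
  apply (angle_eq_iff_det2 _ _ _ _ _ _ hBB'A hCDC').
  assert (hinscribed : det2 (turn D B A) (turn D C A) = 0)
    by (rewrite det2_turn_inscribed in hcyc; lra).
  assert (hDB : 0 < dot (vsub D B) (vsub D B)) by exact (dot_vsub_pos _ _ _ hBB'D).
  assert (hAC : 0 < dot (vsub A C) (vsub A C)).
  { pose proof (dot_vsub_pos _ _ _ hABC). unfold dot, vsub in *; simpl in *. nra. }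
  pose proof (det2_cmul (turn B' B D) (turn D B A) (turn A C C') (turn D C A)) as hsum.
  rewrite hbase, hinscribed, (cmul_comm (turn A C C')), !turn_cmul, det2_scale in hsum.
  apply (Rmult_eq_reg_l (dot (vsub D B) (vsub D B) * dot (vsub A C) (vsub A C))); nra.
Qed.

Lemma add_mod_neq (a d n : nat) : (0 < d < n)%nat -> ((a + d) mod n <> a mod n)%nat.
Proof.
  intros Hd E.
  pose proof (Nat.div_mod_eq (a + d) n). pose proof (Nat.div_mod_eq a n).
  assert (n * ((a + d) / n) = n * (a / n) + d)%nat by lia.
  destruct (Nat.lt_trichotomy ((a + d) / n) (a / n)) as [L|[L|L]]; nia.
Qed.

Lemma vert_wrap (n : nat) (v : nat -> point) (a b : nat) :
  a = (b + n)%nat -> vert n v a = vert n v b.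
Proof.
  intros ->. unfold vert. replace (b + n)%nat with (b + 1 * n)%nat by lia.
  now rewrite Nat.Div0.mod_add.
Qed.

Lemma convex_vert_left (n : nat) (v : nat -> point) (a d : nat) :
  convex_ccw_polygon n v -> (2 <= d < n)%nat ->
  0 < cross3 (vert n v a) (vert n v (a + 1)) (vert n v (a + d)).
Proof.
  intros [_ Hconv] Hd. unfold vert.
  assert (Hsucc : ((a mod n + 1) mod n = (a + 1) mod n)%nat)
    by now rewrite Nat.Div0.add_mod_idemp_l.
  rewrite <- Hsucc. apply Hconv.
  - apply Nat.mod_upper_bound. lia.
  - apply Nat.mod_upper_bound. lia.
  - apply add_mod_neq. lia.
  - rewrite Hsucc. replace (a + d)%nat with (a + 1 + (d - 1))%nat by lia.
    apply add_mod_neq. lia.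
Qed.

Lemma gutkin_angle_shift (n k : nat) (v : nat -> point) :
  (2 <= k)%nat -> (k < n)%nat -> gutkin n k v ->
  forall m : nat,
    angle (vert n v m) (vert n v (m + 1)) (vert n v (m + 2)) =
    angle (vert n v (m + k - 1)) (vert n v (m + k)) (vert n v (m + k + 1)).
Proof.
  intros Hk Hkn [Hconv [alpha Hal]] m.
  destruct (Hal m) as [hBAC hACC']. destruct (Hal (m + 1)%nat) as [hB'BD hBDC].
  replace (m + 1 + k - 1)%nat with (m + k)%nat in hBDC by lia.
  replace (m + 1 + 1)%nat with (m + 2)%nat in hB'BD by lia.
  replace (m + 1 + k)%nat with (m + k + 1)%nat in hB'BD, hBDC by lia.
  rewrite angle_sym in hACC', hBDC.
  rewrite angle_sym, (angle_sym (vert n v (m + k - 1))).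
  apply angle_transfer.
  - exact (convex_vert_left n v m k Hconv ltac:(lia)).
  - pose proof (convex_vert_left n v (m + k) (n - k + 1) Hconv ltac:(lia)) as H.
    now rewrite (vert_wrap n v (m + k + (n - k + 1)) (m + 1)) in H by lia.
  - pose proof (convex_vert_left n v (m + 1) k Hconv ltac:(lia)) as H.
    now replace (m + 1 + 1)%nat with (m + 2)%nat in H by lia;
      replace (m + 1 + k)%nat with (m + k + 1)%nat in H by lia.
  - pose proof (convex_vert_left n v (m + k - 1) (n - k + 1) Hconv ltac:(lia)) as H.
    replace (m + k - 1 + 1)%nat with (m + k)%nat in H by lia.
    now rewrite (vert_wrap n v (m + k - 1 + (n - k + 1)) m) in H by lia.
  - pose proof (convex_vert_left n v (m + 1) (n - 1) Hconv ltac:(lia)) as H.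
    replace (m + 1 + 1)%nat with (m + 2)%nat in H by lia.
    now rewrite (vert_wrap n v (m + 1 + (n - 1)) m) in H by lia.
  - pose proof (convex_vert_left n v (m + k) (n - 1) Hconv ltac:(lia)) as H.
    now rewrite (vert_wrap n v (m + k + (n - 1)) (m + k - 1)) in H by lia.
  - congruence.
  - congruence.
Qed.

Theorem mainTheorem9 (n k : nat) (v : nat -> point) :
  (2 <= k)%nat -> (2 * k <= n)%nat ->
  gutkin n k v ->
  forall i : nat,
    interior_angle n v i = interior_angle n v (i + k - 1).
Proof.
  intros Hk Hkn Hg i. unfold interior_angle.
  pose proof (gutkin_angle_shift n k v Hk ltac:(lia) Hg (i + n - 1)) as H.
  rewrite (vert_wrap n v (i + n - 1 + 1) i),
    (vert_wrap n v (i + n - 1 + 2) (i + 1)),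
    (vert_wrap n v (i + n - 1 + k) (i + k - 1)),
    (vert_wrap n v (i + n - 1 + k + 1) (i + k - 1 + 1)) in H by lia.
  now replace (i + n - 1 + k - 1)%nat with (i + k - 1 + n - 1)%nat in H by lia.
Qed.
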